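(* Let $N,w,h$ be positive integers with $w\geq 2$ and $N/h\leq w\leq N-h+1$. Let $$f_N(w,h)=\max\Big\{\sum_{l=1}^{|\Lambda|}N_l^2\ :\ \Lambda \text{ a partition of }\{1,\dots,N\}\text{ with }\max\Lambda\leq w,\ |\Lambda|\geq h\Big\}.$$ Then $f_N(w,h)=kw^2+u^2+v$, where $k=\left\lfloor\frac{N-h}{w-1}\right\rfloor$, $u=N-h+1-(w-1)k$, and $v=h-k-1$.
   Context: A partition $\Lambda=\{A_1,\dots,A_{|\Lambda|}\}$ of $\{1,\dots,N\}$ is a collection of nonempty pairwise disjoint subsets whose union is $\{1,\dots,N\}$; $|\Lambda|$ is the number of subsets, $N_l=|A_l|$, and $\max\Lambda=\max_lN_l$. *)

From mathcomp Require Import all_boot all_order all_algebra.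
Set Implicit Arguments. Unset Strict Implicit. Unset Printing Implicit Defensive.

(* The ground set {1,...,N} is represented by 'I_N = {0,...,N-1}.
   A partition Lambda is a set of nonempty pairwise disjoint blocks covering
   the ground set: mathcomp's [partition P [set: 'I_N]]. *)

Definition admissible (N w h : nat) (P : {set {set 'I_N}}) : bool :=
  [&& partition P [set: 'I_N], [forall A in P, #|A| <= w] & h <= #|P|].

Definition sqsum (N : nat) (P : {set {set 'I_N}}) : nat :=
  \sum_(A in P) #|A| ^ 2.

Definition fN (N w h : nat) : nat :=
  \max_(P : {set {set 'I_N}} | admissible w h P) sqsum P.

From mathcomp Require Import all_boot all_order all_algebra zify.

(* Writing each block size as 1 + m_A gives sum_A m_A = N - #|P| and
   sqsum P = sum_A m_A^2 + 2 N - #|P|.  Since every m_A <= w - 1 and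
   #|P| >= h, the sum of the m_A^2 is at most the value q (w - 1)^2 + r^2 of
   the greedy split of N - h = q (w - 1) + r into parts of size w - 1.
   Cutting the ground set into consecutive intervals of sizes w (q times),
   r + 1 and 1 (h - q - 1 times) attains this bound. *)

Section GreedySquareSum.

Variable c : nat.
Hypothesis c_gt0 : 0 < c.

Definition greedy_sqsum (x : nat) : nat := x %/ c * c ^ 2 + (x %% c) ^ 2.

Lemma greedy_sqsumD x b : b <= c -> greedy_sqsum x + b ^ 2 <= greedy_sqsum (x + b).
Proof.
move=> b_le_c; rewrite /greedy_sqsum.
have := divn_eq x c; have := ltn_pmod x c_gt0.
set q := x %/ c; set r := x %% c => r_lt_c x_eq.
have [rb_lt_c | c_le_rb] := ltnP (r + b) c.
  have -> : x + b = q * c + (r + b) by lia.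
  rewrite divnMDl // divn_small // modnMDl modn_small //; nia.
have -> : x + b = q.+1 * c + (r + b - c) by lia.
have carry_lt_c : r + b - c < c by lia.
rewrite divnMDl // divn_small // modnMDl modn_small //.
(* r^2 + b^2 <= c^2 + (r + b - c)^2 amounts to (c - r) (c - b) >= 0 *)
have : 0 <= (c - r) * (c - b) by [].
nia.
Qed.

Lemma greedy_sqsum_homo : {homo greedy_sqsum : x y / x <= y}.
Proof.
apply: (@homo_leq _ _ leq) => [//|y x z|x]; first exact: leq_trans.
by rewrite -addn1; apply: leq_trans (greedy_sqsumD x 1 c_gt0); rewrite leq_addr.
Qed.

Lemma sum_sq_le_greedy_sqsum (I : finType) (P : pred I) (b : I -> nat) :
  (forall i, P i -> b i <= c) ->
  \sum_(i | P i) b i ^ 2 <= greedy_sqsum (\sum_(i | P i) b i).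
Proof.
move=> b_le_c.
apply: (big_rec2 (fun y z => y <= greedy_sqsum z)) => [|i y z Pi le_yz].
  by rewrite /greedy_sqsum div0n mod0n.
rewrite addnC [b i + z]addnC.
by apply: leq_trans (greedy_sqsumD z _ (b_le_c i Pi)); rewrite leq_add2r.
Qed.

End GreedySquareSum.

Lemma partition_card_gt0 {T : finType} {P : {set {set T}}} {D A : {set T}} :
  partition P D -> A \in P -> 0 < #|A|.
Proof.
move=> /partition0 P0 AP; rewrite card_gt0.
by apply: contraTneq AP => ->; rewrite P0.
Qed.

Lemma card_ord_partition {N} {P : {set {set 'I_N}}} :
  partition P [set: 'I_N] -> \sum_(A in P) #|A| = N.
Proof. by move=> /card_partition <-; rewrite cardsT card_ord. Qed.

Lemma sum_card_pred {N} {P : {set {set 'I_N}}} :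
  partition P [set: 'I_N] -> \sum_(A in P) #|A|.-1 + #|P| = N.
Proof.
move=> partP; rewrite -[RHS](card_ord_partition partP) -sum1_card -big_split.
by apply: eq_bigr => A AP; rewrite /= addn1 prednK // (partition_card_gt0 partP AP).
Qed.

Lemma sqsum_add_card {N} {P : {set {set 'I_N}}} :
  partition P [set: 'I_N] ->
  sqsum P + #|P| = \sum_(A in P) #|A|.-1 ^ 2 + 2 * N.
Proof.
move=> partP; rewrite -[X in _ + 2 * X](card_ord_partition partP) /sqsum -sum1_card.
rewrite big_distrr -!big_split /=; apply: eq_bigr => A AP.
by case: #|A| (partition_card_gt0 partP AP) => // n _; nia.
Qed.

Lemma sqsum_le {N w h} (P : {set {set 'I_N}}) : 1 < w -> admissible w h P ->
  sqsum P + h <= greedy_sqsum w.-1 (N - h) + 2 * N.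
Proof.
move=> w_gt1 /and3P [partP /forall_inP card_le_w h_le_P].
have c_gt0 : 0 < w.-1 by lia.
have sum_pred := sum_card_pred partP.
apply: leq_trans (_ : sqsum P + #|P| <= _); first by rewrite leq_add2l.
rewrite sqsum_add_card // leq_add2r.
have sq_le : \sum_(A in P) #|A|.-1 ^ 2 <= greedy_sqsum w.-1 (\sum_(A in P) #|A|.-1).
  by apply: sum_sq_le_greedy_sqsum => // A /card_le_w; lia.
by apply: leq_trans sq_le (greedy_sqsum_homo _ c_gt0 _ _ _); lia.
Qed.

Lemma ex_nat_interval (f : nat -> nat) n i :
  f 0 <= i < f n -> exists2 t, t < n & f t <= i < f t.+1.
Proof.
elim: n => [|n IHn]; first lia.
case: (ltnP i (f n)) => [i_lt_fn|fn_le_i] /andP [f0_le_i i_lt_fSn].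
  by have [|t t_lt_n] := IHn; [lia | exists t; first lia].
by exists n; last lia.
Qed.

Lemma card_ord_interval N a b : b <= N -> #|[set i : 'I_N | a <= i < b]| = b - a.
Proof.
move=> b_le_N; rewrite -sum1_card (eq_bigl (fun i : 'I_N => a <= i < b)).
  rewrite big_mkcond /=.
have sum_ind n : \sum_(0 <= i < n) (if a <= i < b then 1 else 0) = minn n b - a.
  elim: n => [|n IHn]; first by rewrite big_geq // min0n.
    by rewrite big_nat_recr //= IHn; case: ifP; lia.
  by rewrite -(big_mkord xpredT (fun i => if a <= i < b then 1 else 0)) sum_ind; lia.
by move=> i; rewrite inE.
Qed.

Section IntervalPartition.

Variables (N : nat) (s : nat -> nat).

Definition psum (t : nat) : nat := \sum_(j < t) s j.

Lemma psumS t : psum t.+1 = psum t + s t.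
Proof. by rewrite /psum big_ord_recr. Qed.

Lemma psum_homo : {homo psum : t t' / t <= t'}.
Proof.
apply: (@homo_leq _ _ leq) => [//|t t' t''|t]; first exact: leq_trans.
by rewrite psumS leq_addr.
Qed.

Definition interval_block (t : nat) : {set 'I_N} :=
  [set i : 'I_N | psum t <= i < psum t.+1].

Lemma card_interval_block t : psum t.+1 <= N -> #|interval_block t| = s t.
Proof. by move=> /card_ord_interval ->; rewrite psumS addKn. Qed.

Lemma interval_block_disjoint t t' :
  t != t' -> [disjoint interval_block t & interval_block t'].
Proof.
have disj t1 t2 : t1 < t2 -> [disjoint interval_block t1 & interval_block t2].
  move=> lt_t12; apply/pred0P => i /=; rewrite !inE.
  apply/negP => /andP [/andP [_ i_lt] /andP [le_i _]].
  by have := psum_homo _ _ lt_t12; lia.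
by rewrite neq_ltn => /orP [/disj|/disj]; rewrite // disjoint_sym.
Qed.

Variable h : nat.
Hypothesis s_gt0 : forall t, t < h -> 0 < s t.
Hypothesis psum_h : psum h = N.

Definition interval_partition : {set {set 'I_N}} := [set interval_block t | t : 'I_h].

Lemma psumS_le_N (t : 'I_h) : psum t.+1 <= N.
Proof. by rewrite -psum_h psum_homo. Qed.

Lemma set0_notin_interval_partition : set0 \notin interval_partition.
Proof.
apply/imsetP => -[t _ /esym/eqP]; apply/negP.
by rewrite -card_gt0 card_interval_block ?psumS_le_N ?s_gt0.
Qed.

Lemma interval_partition_trivI : trivIset interval_partition /\
  {in predT &, injective (fun t : 'I_h => interval_block t)}.
Proof.
apply: trivIimset => [t t' _ _ neq_t't|]; last exact: set0_notin_interval_partition.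
by apply: interval_block_disjoint; rewrite eq_sym.
Qed.

Lemma cover_interval_partition : cover interval_partition = [set: 'I_N].
Proof.
apply/setP => i; rewrite inE; apply/bigcupP.
have [|t t_lt_h i_in_t] := @ex_nat_interval psum h i.
  by rewrite psum_h /psum big_ord0 ltn_ord.
by exists (interval_block (Ordinal t_lt_h)); [apply: imset_f | rewrite inE].
Qed.

Lemma interval_partitionP : partition interval_partition [set: 'I_N].
Proof.
apply/and3P; split; last exact: set0_notin_interval_partition.
  by rewrite cover_interval_partition.
by case: interval_partition_trivI.
Qed.

Lemma card_interval_partition : #|interval_partition| = h.
Proof.
by rewrite card_in_imset ?card_ord //; case: interval_partition_trivI.
Qed.

Lemma sum_interval_partition (F : nat -> nat) :
  \sum_(A in interval_partition) F #|A| = \sum_(t < h) F (s t).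
Proof.
rewrite big_imset /=; last by case: interval_partition_trivI.
by apply: eq_bigr => t _; rewrite card_interval_block ?psumS_le_N.
Qed.

Lemma interval_partition_card_le m :
  (forall t, t < h -> s t <= m) -> forall A, A \in interval_partition -> #|A| <= m.
Proof.
move=> s_le_m A /imsetP [t _ ->].
by rewrite card_interval_block ?psumS_le_N ?s_le_m.
Qed.

End IntervalPartition.

Definition greedy_size (w k u t : nat) : nat :=
  if t < k then w else if t == k then u else 1.

Lemma sum_greedy_size (F : nat -> nat) w k u h : k <= h ->
  \sum_(t < h) F (greedy_size w k u t) = k * F w + (k < h) * F u + (h - k.+1) * F 1.
Proof.
move=> k_le_h; rewrite -(big_mkord xpredT (fun t => F (greedy_size w k u t))).
rewrite (big_cat_nat (leq0n k) k_le_h) /=.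
rewrite (eq_big_nat _ _ (F2 := fun=> F w)) => [|t /andP [_ t_lt_k]]; last first.
  by rewrite /greedy_size t_lt_k.
rewrite sum_nat_const_nat subn0 -addnA; congr (_ + _).
have [k_lt_h|h_le_k] := ltnP k h; last first.
  have no_tail : h - k.+1 = 0 by lia.
  by rewrite big_geq // no_tail.
rewrite big_ltn // /greedy_size ltnn eqxx.
rewrite (eq_big_nat _ _ (F2 := fun=> F 1)) => [|t /andP [k_lt_t _]].
  by rewrite sum_nat_const_nat mul1n.
by rewrite ltnNge (ltnW k_lt_t) gtn_eqF.
Qed.

Lemma greedy_partition_admissible {N w h} : 1 < w -> h <= N <= w * h ->
  exists2 P : {set {set 'I_N}}, admissible w h P &
    sqsum P + h = greedy_sqsum w.-1 (N - h) + 2 * N.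
Proof.
move=> w_gt1 /andP [h_le_N N_le_wh].
have c_gt0 : 0 < w.-1 by lia.
have := divn_eq (N - h) w.-1; have := ltn_pmod (N - h) c_gt0.
set k := (N - h) %/ w.-1; set r := (N - h) %% w.-1 => r_lt_c Nh_eq.
have k_le_h : k <= h by rewrite -(leq_pmul2r c_gt0); nia.
have r_eq0 : k = h -> r = 0 by nia.
pose s := greedy_size w k r.+1.
have s_gt0 t : t < h -> 0 < s t.
  by rewrite /s /greedy_size => _; case: ifP => _; [lia | case: ifP].
have s_le_w t : t < h -> s t <= w.
  by rewrite /s /greedy_size => _; case: ifP => // _; case: ifP => _; lia.
have psum_h : psum s h = N.
  rewrite /psum (sum_greedy_size id) //.
  by have [k_lt_h|] := ltnP k h; [lia | have := r_eq0; lia].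
exists (interval_partition N s h).
  apply/and3P; split; first exact: interval_partitionP.
    exact/forall_inP/interval_partition_card_le.
  by rewrite card_interval_partition.
rewrite /sqsum (sum_interval_partition _ _ _ s_gt0 psum_h (fun n => n ^ 2)).
rewrite (sum_greedy_size (fun n => n ^ 2)) //.
rewrite /greedy_sqsum -/k -/r.
have [k_lt_h|] := ltnP k h; first nia.
by have := r_eq0; nia.
Qed.

Lemma fN_greedy N w h : 1 < w -> h <= N <= w * h ->
  fN N w h + h = greedy_sqsum w.-1 (N - h) + 2 * N.
Proof.
move=> w_gt1 hNw; have [P admP sqP] := greedy_partition_admissible w_gt1 hNw.
rewrite -sqP; congr (_ + _); apply/eqP; rewrite eqn_leq leq_bigmax_cond // andbT.
by apply/bigmax_leqP => Q admQ; rewrite -(leq_add2r h) sqP sqsum_le.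
Qed.

Local Open Scope ring_scope.

Theorem lemma1 (N w h : nat) :
  (0 < N)%N -> (0 < h)%N -> (2 <= w)%N ->
  (N <= w * h)%N -> (w + h <= N + 1)%N ->
  let k : nat := ((N - h) %/ (w - 1))%N in
  let u : int := N%:Z - h%:Z + 1 - (w%:Z - 1) * k%:Z in
  let v : int := h%:Z - k%:Z - 1 in
  (fN N w h)%:Z = k%:Z * w%:Z ^+ 2 + u ^+ 2 + v.
Proof.
move=> _ _ w_gt1 N_le_wh wh_le_N k u v.
have hNw : (h <= N <= w * h)%N by apply/andP; split; lia.
have := fN_greedy N w h w_gt1 hNw; have := divn_eq (N - h) w.-1.
rewrite /greedy_sqsum /u /v /k subn1.
move: {k u v}((N - h) %/ w.-1)%N ((N - h) %% w.-1)%N => k r N_eq fN_eq.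
have w_eq : w = (w.-1).+1 by lia.
move: w.-1 w_eq N_eq fN_eq => c -> N_eq fN_eq.
have {}N_eq : N = (k * c + r + h)%N by lia.
subst N; lia.
Qed.
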